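(* Let $\mathcal G=\langle V=V_{\mathrm{Min}}\uplus V_{\mathrm{Max}}, V_T, A, E, \omega\rangle$ be a finite weighted game and $c\colon V_T\to\mathbb Z$. Assume that the subgraph induced by $V\setminus V_T$ is strongly connected, that every cycle all of whose vertices lie in $V\setminus V_T$ has negative weight, and that no vertex has value $+\infty$ (with respect to $c$). Then a vertex $v\in V\setminus V_T$ has value $-\infty$ if and only if $v$ does not belong to the attractor of Max to $V_T$.
   Context: A weighted game has vertices $V$ partitioned into vertices of Min and of Max, targets $V_T\subseteq V_{\mathrm{Min}}$, alphabet $A$, edges $E\subseteq V\times A\times V$, weights $\omega\colon E\to\mathbb Z$, and is deadlock-free and deterministic (for each $(v,a)$ at most one $v'$ with $(v,a,v')\in E$). A cycle is a finite sequence of consecutive edges starting and ending at the same vertex (length $\ge 1$); its weight is the sum of its edge weights. A strategy of a player chooses, after each finite play ending in one of its vertices, a letter of an outgoing edge. With target values $c$, the weight of a play is $+\infty$ if it never visits $V_T$, and otherwise the sum of its edge weights up to the first visit of some $t\in V_T$ plus $c(t)$; the value of $v$ is $\inf_{\sigma_{\mathrm{Min}}}\sup_{\sigma_{\mathrm{Max}}}$ (equal to $\sup_{\sigma_{\mathrm{Max}}}\inf_{\sigma_{\mathrm{Min}}}$) of the weight of the outcome from $v$. The attractor of Max to $V_T$ is the set of vertices $v$ from which Max has a strategy such that every play from $v$ conforming to it visits $V_T$. *)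

From HB Require Import structures.
From mathcomp Require Import all_boot all_order all_algebra.
From mathcomp Require Import boolp classical_sets reals constructive_ereal ereal.
Set Implicit Arguments. Unset Strict Implicit. Unset Printing Implicit Defensive.
Import Order.TTheory GRing.Theory Num.Theory.

(* A finite weighted game is given by:
   - V : finType (vertices), A : finType (alphabet),
   - isMax : pred V  (vertices of Max; the others are vertices of Min),
   - T : pred V      (target vertices V_T),
   - edge : V -> A -> option V  (deterministic edge relation:
       (v,a,v') \in E  iff  edge v a = Some v'),
   - w : V -> A -> int  (weight of the edge (v,a,edge v a)).
   Finite plays from v0 are represented by v0 together with the word of
   letters played so far (this determines the play, by determinism). *)

Section Game.
Variables (V A : finType) (isMax : pred V) (T : pred V)
  (edge : V -> A -> option V) (w : V -> A -> int).

Definition deadlock_free := forall v, exists a, edge v a != None.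

Definition targets_min := forall v, T v -> ~~ isMax v.

Fixpoint run (v0 : V) (ws : seq A) : option V :=
  match ws with
  | [::] => Some v0
  | a :: ws' => match edge v0 a with Some v1 => run v1 ws' | None => None end
  end.

Fixpoint path_in (P : pred V) (v0 : V) (ws : seq A) : bool :=
  match ws with
  | [::] => P v0
  | a :: ws' => P v0 && (match edge v0 a with
                         | Some v1 => path_in P v1 ws'
                         | None => false end)
  end.

Fixpoint path_weight (v0 : V) (ws : seq A) : int :=
  match ws with
  | [::] => 0%R
  | a :: ws' => match edge v0 a with
                | Some v1 => (w v0 a + path_weight v1 ws')%R
                | None => 0%R end
  end.

Definition neg_cycles_outside_targets :=
  forall (v : V) (ws : seq A),
    0 < size ws -> path_in (predC T) v ws -> run v ws = Some v ->
    (path_weight v ws < 0)%R.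

Definition nontarget_edge : rel V :=
  fun x y => [&& ~~ T x, ~~ T y & [exists a, edge x a == Some y]].
Definition strongly_connected_outside_targets :=
  forall u v, ~~ T u -> ~~ T v -> connect nontarget_edge u v.

Definition strategy := V -> seq A -> A.

Definition valid_strategy (b : bool) (s : strategy) :=
  forall v0 ws u, run v0 ws = Some u -> isMax u = b -> edge u (s v0 ws) != None.

Section Outcome.
Variables (smin smax : strategy) (v0 : V).

Definition choice (u : V) (ws : seq A) : A :=
  if isMax u then smax v0 ws else smin v0 ws.

Fixpoint state (n : nat) : V * seq A :=
  match n with
  | 0 => (v0, [::])
  | n'.+1 => let: (u, ws) := state n' in
             let a := choice u ws in
             match edge u a with
             | Some u' => (u', rcons ws a)
             | None => (u, rcons ws a) end
  end.

Definition pos (n : nat) : V := (state n).1.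
Definition letter (n : nat) : A := choice (state n).1 (state n).2.

End Outcome.

Definition payoff {R : realType} (c : V -> int) (smin smax : strategy) (v0 : V)
  : \bar R :=
  match pselect (exists n, T (pos smin smax v0 n)) with
  | left H =>
      let n := ex_minn H in
      (((\sum_(i < n) w (pos smin smax v0 i) (letter smin smax v0 i))
         + c (pos smin smax v0 n))%R%:~R)%:E
  | right _ => +oo%E
  end.

Definition game_value {R : realType} (c : V -> int) (v : V) : \bar R :=
  ereal_inf [set ereal_sup [set payoff c smin smax v | smax in
                             [set s | valid_strategy true s]]
            | smin in [set s | valid_strategy false s]].

Definition conforms_max (s : strategy) (v : V) (p : nat -> V) (a : nat -> A) :=
  [/\ p 0 = v,
      forall n, edge (p n) (a n) = Some (p n.+1) &
      forall n, isMax (p n) -> a n = s v (mkseq a n)].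

Definition max_attractor (v : V) :=
  exists s, valid_strategy true s /\
    forall p a, conforms_max s v p a -> exists n, T (p n).

End Game.

From Pilot Require Import Defs.
From HB Require Import structures.
From mathcomp Require Import all_boot all_order all_algebra.
From mathcomp Require Import boolp classical_sets reals constructive_ereal ereal.
From mathcomp Require Import zify.
Import Order.TTheory GRing.Theory Num.Theory.
Set Implicit Arguments. Unset Strict Implicit. Unset Printing Implicit Defensive.

(* If v is in the attractor, Max forces a visit to V_T within |V| steps, so
   every payoff from v is at least -(|V| max|w| + max|c|) and the value is
   finite.  Otherwise Min can keep the play outside the attractor, hence
   outside V_T, forever.  Every path outside V_T of length L contains about
   L/|V| disjoint cycles, all of negative weight, so its weight is at most
   const - L/|V|.  Min therefore plays "escape" for N steps, reaching some u
   with a path weight below any prescribed bound, and then switches to a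
   strategy witnessing that the value of u is < +oo. *)

Section Paths.
Variables (V A : finType) (T : pred V) (edge : V -> A -> option V) (w : V -> A -> int).

Lemma run_cat v ws1 ws2 :
  run edge v (ws1 ++ ws2) = obind (run edge ^~ ws2) (run edge v ws1).
Proof. by elim: ws1 v => [|a ws1 IH] v //=; case: (edge v a). Qed.

Lemma run_rcons v ws a : run edge v (rcons ws a) = obind (edge ^~ a) (run edge v ws).
Proof. by rewrite -cats1 run_cat; case: (run edge v ws) => //= u; case: (edge u a). Qed.

Lemma run_mkseq (p : nat -> V) (a : nat -> A) :
  (forall n, edge (p n) (a n) = Some (p n.+1)) ->
  forall n, run edge (p 0) (mkseq a n) = Some (p n).
Proof. by move=> pa; elim=> [//|n IH]; rewrite mkseqS run_rcons IH /= pa. Qed.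

Lemma path_in_run P v ws : path_in edge P v ws -> exists u, run edge v ws = Some u.
Proof.
elim: ws v => [|a ws IH] v /=; first by exists v.
by case/andP=> _; case: (edge v a) => // v1 /IH.
Qed.

Lemma path_weight_cat v ws1 ws2 u : run edge v ws1 = Some u ->
  path_weight edge w v (ws1 ++ ws2) =
  (path_weight edge w v ws1 + path_weight edge w u ws2)%R.
Proof.
elim: ws1 v => [|a ws1 IH] v /=; first by move=> [->]; rewrite add0r.
by case: (edge v a) => // v1 /IH ->; rewrite addrA.
Qed.

Lemma path_in_cat P v ws1 ws2 u : run edge v ws1 = Some u ->
  path_in edge P v (ws1 ++ ws2) = path_in edge P v ws1 && path_in edge P u ws2.
Proof.
elim: ws1 v => [|a ws1 IH] v /=; last by case: (edge v a) => // v1 /IH ->; rewrite andbA.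
by move=> [->]; case: ws2 => [|a ws2] /=; rewrite ?andbb // andbA andbb.
Qed.

Lemma run_cycle_decomposition v ws u :
  run edge v ws = Some u -> #|V| <= size ws ->
  exists ws1 cyc ws2 x, [/\ ws = ws1 ++ cyc ++ ws2, run edge v ws1 = Some x,
    run edge x cyc = Some x & 0 < size cyc <= #|V|].
Proof.
move=> run_ws long.
have run_take k : exists x, run edge v (take k ws) = Some x.
  case run_k: (run edge v (take k ws)) => [x|]; first by exists x.
  by move: run_ws; rewrite -(cat_take_drop k ws) run_cat run_k.
pose f (i : 'I_#|V|.+1) := odflt v (run edge v (take i ws)).
have /injectivePn[i [j neq_ij fij]] : ~~ injectiveb f.
  by apply/negP => /injectiveP/leq_card; rewrite card_ord ltnn.
wlog lt_ij : i j neq_ij fij / i < j.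
  move=> gen; case: (ltngtP i j) => [|lt_ji|/val_inj eq_ij]; first exact: gen.
    by apply: (gen j i) => //; rewrite eq_sym.
  by rewrite eq_ij eqxx in neq_ij.
have [x run_i] := run_take i; have [y run_j] := run_take j.
set cyc := take (j - i) (drop i ws).
have take_j : take j ws = take i ws ++ cyc by rewrite -takeD subnKC // ltnW.
exists (take i ws), cyc, (drop (j - i) (drop i ws)), x; split=> //.
- by rewrite !cat_take_drop.
- by move: run_j fij; rewrite /f take_j run_cat run_i /= => -> /= ->.
- have lt_j := ltn_ord j; rewrite size_takel ?size_drop; lia.
Qed.

Lemma sum_weight_path (p : nat -> V) (a : nat -> A) n :
  (forall k, edge (p k) (a k) = Some (p k.+1)) ->
  (\sum_(i < n) w (p i) (a i))%R = path_weight edge w (p 0) (mkseq a n).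
Proof.
move=> e_pa; elim: n => [|n IH]; first by rewrite big_ord0.
rewrite mkseqS -cats1 (path_weight_cat _ (run_mkseq e_pa n)) -IH big_ord_recr /=.
by rewrite e_pa addr0.
Qed.

Lemma path_in_mkseq (P : pred V) (p : nat -> V) (a : nat -> A) n :
  (forall k, edge (p k) (a k) = Some (p k.+1)) ->
  (forall k, k <= n -> P (p k)) -> path_in edge P (p 0) (mkseq a n).
Proof.
move=> e_pa; elim: n => [|n IH] Pp; first exact: Pp.
rewrite mkseqS -cats1 (path_in_cat _ _ (run_mkseq e_pa n)) /= e_pa !Pp // !andbT.
by apply: IH => k le_kn; apply/Pp/leqW.
Qed.

Section NegativeCycles.
Hypothesis neg_cycles : neg_cycles_outside_targets T edge w.
Variable W : nat.
Hypothesis w_le : forall u a, (w u a <= W%:Z)%R.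

Lemma path_weight_le_size v ws : (path_weight edge w v ws <= (size ws * W)%:Z)%R.
Proof.
elim: ws v => [|a ws IH] v //=.
by case: (edge v a) => // v1; rewrite mulSn PoszD lerD.
Qed.

(* Cutting out a cycle shortens a path by at most |V| and raises its weight
   by at least 1. *)
Lemma size_le_path_weight v ws : path_in edge (predC T) v ws ->
  ((size ws)%:Z <= #|V|%:Z * ((#|V| * W).+1%:Z - path_weight edge w v ws))%R.
Proof.
have [n] := ubnP (size ws); elim: n v ws => // n IH v ws /ltnSE le_ws out.
have [u run_ws] := path_in_run out.
have [short | long] := ltnP (size ws) #|V|.
  by have := path_weight_le_size v ws; nia.
have [ws1 [cyc [ws2 [x [eq_ws run1 cycle /andP[cyc_gt0 cyc_le]]]]]] :=
  run_cycle_decomposition run_ws long.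
move: out le_ws; rewrite eq_ws (path_in_cat _ _ run1) (path_in_cat _ _ cycle).
rewrite !(path_weight_cat _ run1) (path_weight_cat _ cycle) !size_cat.
case/and3P => out1 outc out2 le_ws.
have neg : (path_weight edge w x cyc < 0)%R by apply: neg_cycles.
have := IH v (ws1 ++ ws2); rewrite (path_in_cat _ _ run1) out1 out2.
rewrite (path_weight_cat _ run1) size_cat => /(_ _ isT); nia.
Qed.

End NegativeCycles.
End Paths.

Section Strategies.
Variables (V A : finType) (isMax : pred V) (edge : V -> A -> option V).

Definition positional (f : V -> A) : strategy V A :=
  fun v0 ws => f (odflt v0 (run edge v0 ws)).

Lemma positional_valid b f : (forall x, edge x (f x) != None) ->
  valid_strategy isMax edge b (positional f).
Proof. by move=> f_ok v0 ws u run_ws _; rewrite /positional run_ws. Qed.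

Definition switch_after N (s : strategy V A) (sigma : V -> strategy V A) : strategy V A :=
  fun v0 ws => if size ws < N then s v0 ws else
    let x := odflt v0 (run edge v0 (take N ws)) in sigma x x (drop N ws).

Lemma switch_after_valid b N s sigma : valid_strategy isMax edge b s ->
  (forall x, valid_strategy isMax edge b (sigma x)) ->
  valid_strategy isMax edge b (switch_after N s sigma).
Proof.
move=> s_ok sigma_ok v0 ws u run_ws owner; rewrite /switch_after.
case: ifP => _; first exact: s_ok run_ws owner.
move: run_ws; rewrite -{1}(cat_take_drop N ws) run_cat.
by case: (run edge v0 (take N ws)) => [x|] //= /sigma_ok; apply.
Qed.

(* The continuation of s after the history ws0 from v, as a strategy from u;
   from initial vertices other than u it plays f, which only serves to keep
   it valid. *)
Definition resume (s : strategy V A) v ws0 u (f : V -> A) : strategy V A :=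
  fun v0 ws => if v0 == u then s v (ws0 ++ ws) else positional f v0 ws.

Lemma resume_valid b s v ws0 u f : valid_strategy isMax edge b s ->
  run edge v ws0 = Some u -> (forall x, edge x (f x) != None) ->
  valid_strategy isMax edge b (resume s v ws0 u f).
Proof.
move=> s_ok run_ws0 f_ok v0 ws x run_ws owner; rewrite /resume.
have [eq_v0 | _] := eqVneq v0 u; last by rewrite /positional run_ws; apply: f_ok.
by apply: s_ok owner; rewrite run_cat run_ws0 -eq_v0.
Qed.

End Strategies.

Section Outcome.
Variables (V A : finType) (isMax : pred V) (edge : V -> A -> option V).
Variables (smin smax : strategy V A) (v0 : V).
Local Notation state := (state isMax edge smin smax v0).
Local Notation pos := (pos isMax edge smin smax v0).
Local Notation letter := (letter isMax edge smin smax v0).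

Lemma state_word n : (state n).2 = mkseq letter n.
Proof.
elim: n => [//|n IH] /=; rewrite mkseqS -IH /Defs.letter.
by case: (state n) => u ws /=; case: (edge u _).
Qed.

Lemma pos_succ n : pos n.+1 = odflt (pos n) (edge (pos n) (letter n)).
Proof. by rewrite /Defs.pos /Defs.letter /=; case: (state n) => u ws /=; case: (edge u _). Qed.

Lemma letter_max n : isMax (pos n) -> letter n = smax v0 (mkseq letter n).
Proof. by rewrite -state_word /Defs.letter /Defs.choice => ->. Qed.

Lemma letter_min n : ~~ isMax (pos n) -> letter n = smin v0 (mkseq letter n).
Proof. by rewrite -state_word /Defs.letter /Defs.choice => /negbTE ->. Qed.

Hypothesis smin_valid : valid_strategy isMax edge false smin.
Hypothesis smax_valid : valid_strategy isMax edge true smax.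

Lemma letter_edge n : run edge v0 (mkseq letter n) = Some (pos n) ->
  edge (pos n) (letter n) != None.
Proof.
rewrite -state_word /Defs.letter /Defs.choice => run_n.
by case: ifP => owner; [exact: smax_valid run_n owner | exact: smin_valid run_n owner].
Qed.

Lemma run_outcome n : run edge v0 (mkseq letter n) = Some (pos n).
Proof.
elim: n => [//|n IH]; rewrite mkseqS run_rcons IH /= pos_succ.
by case: (edge _ _) (letter_edge IH).
Qed.

Lemma edge_outcome n : edge (pos n) (letter n) = Some (pos n.+1).
Proof. by rewrite pos_succ; case: (edge _ _) (letter_edge (run_outcome n)). Qed.

End Outcome.

Lemma ereal_le_int_eqNy (R : realType) (x : \bar R) :
  (forall k : int, (x <= (k%:~R)%:E)%E) -> x = -oo%E.
Proof.
case: x => [r | | ] // x_le; last by have := x_le 0.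
by have := x_le (Num.ceil r - 1)%R; rewrite lee_fin leNgt ceilB1_lt.
Qed.

Section Payoff.
Variables (R : realType) (V A : finType) (isMax T : pred V).
Variables (edge : V -> A -> option V) (w : V -> A -> int) (c : V -> int).
Local Notation payoff := (@payoff V A isMax T edge w R c).
Local Notation pos := (pos isMax edge).
Local Notation letter := (letter isMax edge).

Lemma payoff_hit smin smax v n : T (pos smin smax v n) ->
  (forall k, k < n -> ~~ T (pos smin smax v k)) ->
  payoff smin smax v =
  (((\sum_(i < n) w (pos smin smax v i) (letter smin smax v i)
     + c (pos smin smax v n))%R)%:~R)%:E.
Proof.
move=> Tn before; rewrite /Defs.payoff; case: pselect => [hit | []]; last by exists n.
case: ex_minnP => m Tm min_m; suff -> : m = n by [].
by apply/eqP; rewrite eqn_leq min_m // leqNgt; apply/negP => /before; rewrite Tm.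
Qed.

Lemma payoff_never smin smax v : (forall n, ~~ T (pos smin smax v n)) ->
  payoff smin smax v = +oo%E.
Proof.
move=> never; rewrite /Defs.payoff; case: pselect => // -[n Tn].
by have := never n; rewrite Tn.
Qed.

End Payoff.

Section Shift.
Variables (R : realType) (V A : finType) (isMax T : pred V).
Variables (edge : V -> A -> option V) (w : V -> A -> int) (c : V -> int).
Variables (smin smax smin' smax' : strategy V A) (v : V) (N : nat).
Local Notation pos := (pos isMax edge).
Local Notation letter := (letter isMax edge).
Local Notation payoff := (@payoff V A isMax T edge w R c).
Local Notation u := (pos smin smax v N).
Local Notation wN := (mkseq (letter smin smax v) N).
Hypothesis smin_shift : forall ws, smin v (wN ++ ws) = smin' u ws.
Hypothesis smax_shift : forall ws, smax v (wN ++ ws) = smax' u ws.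
Local Notation state' := (state isMax edge smin' smax' u).

Lemma state_shift m :
  state isMax edge smin smax v (N + m) = ((state' m).1, wN ++ (state' m).2).
Proof.
elim: m => [|m IH]; first by rewrite addn0 /= cats0 -state_word /Defs.pos -surjective_pairing.
rewrite addnS /= IH; case: (state' m) => x ws /=.
have -> : Defs.choice isMax smin smax v x (wN ++ ws) = Defs.choice isMax smin' smax' u x ws.
  by rewrite /Defs.choice smin_shift smax_shift.
by case: (edge x _) => [y|]; rewrite rcons_cat.
Qed.

Lemma pos_shift m : pos smin smax v (N + m) = pos smin' smax' u m.
Proof. by rewrite /Defs.pos state_shift. Qed.

Lemma letter_shift m :
  letter smin smax v (N + m) = letter smin' smax' u m.
Proof.
rewrite /Defs.letter state_shift /= /Defs.choice smin_shift smax_shift.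
by case: (state' m).
Qed.

Lemma payoff_shift : (forall k, k < N -> ~~ T (pos smin smax v k)) ->
  payoff smin smax v =
  ((((\sum_(i < N) w (pos smin smax v i) (letter smin smax v i))%R)%:~R)%:E
   + payoff smin' smax' u)%E.
Proof.
move=> before.
have [hit | never] := pselect (exists m, T (pos smin' smax' u m)).
  case: (ex_minnP hit) => m Tm min_m.
  have before' k : k < m -> ~~ T (pos smin' smax' u k).
    by move=> lt_km; apply/negP => /min_m; rewrite leqNgt lt_km.
  rewrite (payoff_hit _ _ _ Tm before') (payoff_hit _ _ _ (n := N + m)) ?pos_shift //.
  2: {
    move=> k lt_k; have [/before //|le_Nk] := ltnP k N.
    by rewrite -(subnKC le_Nk) pos_shift before' //; lia. }
  rewrite big_split_ord /= -EFinD -intrD addrA.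
  by congr (((_ + _ + _)%:~R)%:E); apply: eq_bigr => i _; rewrite pos_shift letter_shift.
have never' k : ~~ T (pos smin' smax' u k) by apply/negP => Tk; apply: never; exists k.
rewrite !payoff_never // => k.
by have [/before //|le_Nk] := ltnP k N; rewrite -(subnKC le_Nk) pos_shift.
Qed.

End Shift.

Section Attractor.
Variables (V A : finType) (isMax T : pred V) (edge : V -> A -> option V).
Variable next : V -> A.
Hypothesis next_edge : forall x, edge x (next x) != None.

Definition attr_step (X : {set V}) : {set V} :=
  [set x | T x || (if isMax x then [exists a, oapp (mem X) false (edge x a)]
                   else [forall a, oapp (mem X) true (edge x a)])].

Definition attractor := fixset attr_step.

Definition attr_rank k := iter k attr_step finset.set0.

Lemma attr_step_mono : {homo attr_step : X Y / X \subset Y}.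
Proof.
move=> X Y /fintype.subsetP sub_XY; apply/fintype.subsetP => x; rewrite !inE /=.
case/orP => [-> // | ]; case: (isMax x) => [/existsP[a Xa] | /forallP all_a].
  by apply/orP; right; apply/existsP; exists a; move: Xa; case: (edge x a) => //= y /sub_XY.
by apply/orP; right; apply/forallP => a; move: (all_a a); case: (edge x a) => //= y /sub_XY.
Qed.

Lemma attractor_fix x : (x \in attractor) = (x \in attr_step attractor).
Proof. by rewrite fixsetK //; exact: attr_step_mono. Qed.

Lemma target_attractor x : T x -> x \in attractor.
Proof. by move=> Tx; rewrite attractor_fix inE Tx. Qed.

Lemma notin_attractor_target x : x \notin attractor -> ~~ T x.
Proof. exact/contra/target_attractor. Qed.

Definition escape x :=
  odflt (next x) [pick a | oapp (fun y => y \notin attractor) false (edge x a)].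

(* From a Max vertex of rank r + 1 (first appearing in attr_rank (r + 1)),
   move into attr_rank r. *)
Definition attract x := odflt (next x)
  [pick a | oapp (mem (attr_rank (fix_order attr_step x).-1)) false (edge x a)].

Lemma escape_edge x : edge x (escape x) != None.
Proof. by rewrite /escape; case: pickP => [a /=|_ //]; case: (edge x a). Qed.

Lemma attract_edge x : edge x (attract x) != None.
Proof. by rewrite /attract; case: pickP => [a /=|_ //]; case: (edge x a). Qed.

Lemma escape_step x a y : x \notin attractor -> edge x a = Some y ->
  (~~ isMax x -> a = escape x) -> y \notin attractor.
Proof.
rewrite attractor_fix inE negb_or => /andP[_] + e_xy.
case: ifPn => [_ /existsPn/(_ a) + _ | _ /forallPn[b out_b] /(_ isT) eq_a].
  by rewrite e_xy.
move: e_xy; rewrite eq_a /escape; case: pickP => [b' /= + e_xy | none]; first by rewrite e_xy.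
by have := none b; case: (edge x b) out_b => //= z /negbTE ->.
Qed.

Lemma attract_step k x a y : x \in attr_rank k.+1 -> ~~ T x -> edge x a = Some y ->
  (isMax x -> a = attract x) -> y \in attr_rank k.
Proof.
move=> x_in Tx e_xy max_a; have x_in' := x_in.
rewrite /attr_rank /= inE (negbTE Tx) /= in x_in'.
case: ifP x_in' max_a => [owner _ /(_ isT) eq_a | _ /forallP/(_ a) + _]; last by rewrite e_xy.
have /andP[ord_gt0 ord_le] : 0 < fix_order attr_step x <= k.+1.
  by rewrite -(in_iter_fixE attr_step_mono).
have : x \in attr_rank (fix_order attr_step x).
  by rewrite /attr_rank (in_iter_fixE attr_step_mono) ord_gt0 /=.
rewrite -(prednK ord_gt0) /attr_rank /= inE (negbTE Tx) owner => /existsP[b b_in].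
move: e_xy; rewrite eq_a /attract; case: pickP => [b' /= + e_xy | none]; last first.
  by have := none b; rewrite b_in.
rewrite e_xy /=; apply: fintype.subsetP; apply: subset_iter => //; first exact: attr_step_mono.
by rewrite -ltnS prednK.
Qed.

Lemma attract_reaches_target (p : nat -> V) (a : nat -> A) k :
  (forall n, edge (p n) (a n) = Some (p n.+1)) ->
  (forall n, isMax (p n) -> a n = attract (p n)) ->
  p 0 \in attr_rank k -> exists2 m, m <= k & T (p m).
Proof.
elim: k p a => [|k IH] p a e_pa max_a; first by rewrite inE.
move=> p0_in; have [T0 | T0] := boolP (T (p 0)); first by exists 0.
have [|m le_mk Tm] := IH (p \o succn) (a \o succn) (fun n => e_pa n.+1) (fun n => max_a n.+1).
  exact: attract_step p0_in T0 (e_pa 0) (max_a 0).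
by exists m.+1.
Qed.

Lemma escape_avoids_attractor (p : nat -> V) (a : nat -> A) n :
  (forall k, edge (p k) (a k) = Some (p k.+1)) ->
  (forall k, k < n -> ~~ isMax (p k) -> a k = escape (p k)) ->
  p 0 \notin attractor -> p n \notin attractor.
Proof.
move=> e_pa; elim: n => [//|n IH] min_a out0.
apply: escape_step (e_pa n) (min_a n _) => //.
by apply: IH => // k lt_kn; apply: min_a; apply: ltnW.
Qed.

Lemma max_attractorP v : max_attractor isMax T edge v <-> v \in attractor.
Proof.
split=> [[s [s_ok reach]] | v_in].
  apply/negPn/negP => v_out.
  pose smin := positional edge escape.
  have smin_ok : valid_strategy isMax edge false smin := positional_valid escape_edge.
  have [|n Tn] := reach (pos isMax edge smin s v) (letter isMax edge smin s v).
    split=> // n; first exact: edge_outcome.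
    by move=> owner; rewrite letter_max.
  have : pos isMax edge smin s v n \notin attractor.
    apply: escape_avoids_attractor (edge_outcome v smin_ok s_ok) _ v_out => k _ owner.
    by rewrite letter_min // /smin /positional run_outcome.
  by rewrite target_attractor.
exists (positional edge attract); split; first exact: positional_valid attract_edge.
move=> p a [p0 e_pa max_a].
have max_a' n : isMax (p n) -> a n = attract (p n).
  by move=> owner; rewrite max_a // /positional -p0 run_mkseq.
have [|m _ Tm] := attract_reaches_target e_pa max_a' (k := #|V|); first by rewrite p0.
by exists m.
Qed.

End Attractor.

Section Values.
Variables (R : realType) (V A : finType) (isMax T : pred V).
Variables (edge : V -> A -> option V) (w : V -> A -> int) (c : V -> int).
Variable next : V -> A.
Hypothesis next_edge : forall x, edge x (next x) != None.
Local Notation payoff := (@payoff V A isMax T edge w R c).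
Local Notation value := (@game_value V A isMax T edge w R c).
Local Notation pos := (pos isMax edge).
Local Notation letter := (letter isMax edge).
Local Notation valid := (valid_strategy isMax edge).
Local Notation attractor := (attractor isMax T edge).
Local Notation attract := (attract isMax T edge next).
Local Notation escape := (escape isMax T edge next).

Definition wmax := \max_(u : V) \max_(a : A) `|w u a|%N.
Definition cmax := \max_(u : V) `|c u|%N.

Lemma w_le_wmax u a : (w u a <= wmax%:Z)%R /\ (- wmax%:Z <= w u a)%R.
Proof.
have : (`|w u a| <= wmax)%N.
  by apply: leq_trans (leq_bigmax u); exact: (leq_bigmax (F := fun a => `|w u a|%N) a).
lia.
Qed.

Lemma Ncmax_le_c u : (- cmax%:Z <= c u)%R.
Proof.
have : (`|c u| <= cmax)%N by exact: (leq_bigmax (F := fun u => `|c u|%N) u).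
lia.
Qed.

Lemma attractor_payoff_lb smin v : valid false smin -> v \in attractor ->
  ((((- (#|V| * wmax + cmax)%:Z)%R)%:~R)%:E <= payoff smin (positional edge attract) v)%E.
Proof.
move=> smin_ok v_in; set smax := positional edge attract.
have smax_ok : valid true smax := positional_valid (attract_edge isMax T next_edge).
have max_letter n :
    isMax (pos smin smax v n) -> letter smin smax v n = attract (pos smin smax v n).
  by move=> owner; rewrite letter_max // /smax /positional run_outcome.
have [m le_m Tm] := attract_reaches_target (edge_outcome v smin_ok smax_ok) max_letter v_in.
have hit : exists n, T (pos smin smax v n) by exists m.
case: (ex_minnP hit) => m0 Tm0 min_m0.
rewrite (payoff_hit _ _ _ Tm0); last first.
  by move=> k lt_k; apply/negP => /min_m0; rewrite leqNgt lt_k.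
rewrite lee_fin ler_int.
have : (\sum_(i < m0) (- wmax%:Z)
         <= \sum_(i < m0) w (pos smin smax v i) (letter smin smax v i))%R.
  by apply: ler_sum => i _; case: (w_le_wmax (pos smin smax v i) (letter smin smax v i)).
rewrite sumr_const card_ord.
have := Ncmax_le_c (pos smin smax v m0); have := min_m0 m Tm; nia.
Qed.

Lemma value_attractor_lb v : v \in attractor ->
  ((((- (#|V| * wmax + cmax)%:Z)%R)%:~R)%:E <= value v)%E.
Proof.
move=> v_in; apply: le_ereal_inf_tmp => _ [smin smin_ok <-].
apply: le_trans (attractor_payoff_lb smin_ok v_in) _.
apply: ereal_sup_ubound; exists (positional edge attract) => //.
exact: positional_valid (attract_edge isMax T next_edge).
Qed.

Lemma value_lt_pinfty_bound u : value u != +oo%E ->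
  exists sk : strategy V A * int, valid false sk.1 /\
    forall smax, valid true smax -> (payoff sk.1 smax u <= (sk.2%:~R)%:E)%E.
Proof.
rewrite -ltey => /ereal_inf_lt[_ [s s_ok <-]]; set y := ereal_sup _ => y_lt.
exists (s, Num.ceil (fine y)); split=> // smax smax_ok.
apply: (@le_trans _ _ y); first by apply: ereal_sup_ubound; exists smax.
by case: y y_lt => [r _ | // | _]; rewrite ?lee_fin ?ceil_ge ?leNye.
Qed.

Section Switch.
Variables (sigma : V -> strategy V A) (bound : V -> int).
Hypothesis sigma_ok : forall u, valid false (sigma u).
Hypothesis sigma_bound : forall u smax, valid true smax ->
  (payoff (sigma u) smax u <= ((bound u)%:~R)%:E)%E.
Variable N : nat.
Local Notation smin := (switch_after edge N (positional edge escape) sigma).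

Lemma switch_valid : valid false smin.
Proof.
exact: switch_after_valid (positional_valid (escape_edge isMax T next_edge)) sigma_ok.
Qed.

Variables (smax : strategy V A) (v : V).
Hypothesis smax_ok : valid true smax.
Hypothesis v_out : v \notin attractor.

Lemma switch_escapes n : n <= N -> pos smin smax v n \notin attractor.
Proof.
move=> le_nN.
apply: (escape_avoids_attractor (next := next)) (edge_outcome v switch_valid smax_ok) _ v_out.
move=> k lt_kn owner.
rewrite letter_min // {1}/switch_after size_mkseq (leq_trans lt_kn le_nN).
by rewrite {1}/positional (run_outcome v switch_valid smax_ok).
Qed.

Lemma switch_payoff_le : (payoff smin smax v <=
  (((\sum_(i < N) w (pos smin smax v i) (letter smin smax v i)
     + bound (pos smin smax v N))%R)%:~R)%:E)%E.
Proof.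
set u := pos smin smax v N; set wN := mkseq (letter smin smax v) N.
have run_wN : run edge v wN = Some u := run_outcome v switch_valid smax_ok N.
set smax' := resume edge smax v wN u next.
have smax'_ok : valid true smax' := resume_valid smax_ok run_wN next_edge.
rewrite (payoff_shift _ _ _ (smin' := sigma u) (smax' := smax') (N := N)).
- by rewrite intrD EFinD; apply: leeD2l; apply: sigma_bound.
- move=> ws; rewrite /switch_after size_cat size_mkseq ltnNge leq_addr /=.
  by rewrite take_size_cat ?size_mkseq // drop_size_cat ?size_mkseq // run_wN.
- by move=> ws; rewrite /smax' /resume eqxx.
- by move=> k lt_kN; apply/notin_attractor_target/switch_escapes/ltnW.
Qed.

End Switch.

Section UpperBound.
Hypothesis neg_cycles : neg_cycles_outside_targets T edge w.
Hypothesis value_finite : forall u, value u != +oo%E.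

Lemma value_outside_attractor v : v \notin attractor -> value v = -oo%E.
Proof.
move=> v_out; apply: ereal_le_int_eqNy => k.
have [sk sk_ok] := boolp.choice (fun u => value_lt_pinfty_bound (value_finite u)).
pose sigma u := (sk u).1; pose bound u := (sk u).2.
pose bmax := \max_(u : V) `|bound u|%N.
have bound_le u : (bound u <= bmax%:Z)%R.
  have : (`|bound u| <= bmax)%N by exact: (leq_bigmax (F := fun u => `|bound u|%N) u).
  lia.
(* Long enough for the first N moves, all outside V_T, to weigh at most
   -|k| - bmax. *)
pose N := #|V| * ((#|V| * wmax).+1 + `|k|%N + bmax).
pose smin := switch_after edge N (positional edge escape) sigma.
have sigma_ok u : valid false (sigma u) by case: (sk_ok u).
have sigma_bound u smax :
    valid true smax -> (payoff (sigma u) smax u <= ((bound u)%:~R)%:E)%E.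
  by case: (sk_ok u) => _; apply.
apply: (@le_trans _ _ (ereal_sup [set payoff smin smax v | smax in [set s | valid true s]])).
  by apply: ereal_inf_lbound; exists smin => //; exact: switch_valid.
apply: ge_ereal_sup => _ [smax smax_ok <-].
apply: le_trans (switch_payoff_le sigma_ok sigma_bound N smax_ok v_out) _.
rewrite lee_fin ler_int.
have outside : path_in edge (predC T) v (mkseq (letter smin smax v) N).
  apply: (path_in_mkseq (edge_outcome v (switch_valid sigma_ok N) smax_ok)) => n le_nN.
  exact/notin_attractor_target/switch_escapes.
have := size_le_path_weight neg_cycles (fun u a => (w_le_wmax u a).1) outside.
rewrite size_mkseq -(sum_weight_path w N (edge_outcome v (switch_valid sigma_ok N) smax_ok)).
rewrite /N PoszM ler_pM2l; last by apply/card_gt0P; exists v.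
have := bound_le (pos smin smax v N); set S := (\sum_(i < _) _)%R; set b := bound _; lia.
Qed.

End UpperBound.
End Values.

Theorem proposition3 (R : realType) (V A : finType) (isMax T : pred V)
  (edge : V -> A -> option V) (w : V -> A -> int) (c : V -> int) :
  deadlock_free edge ->
  targets_min isMax T ->
  strongly_connected_outside_targets T edge ->
  neg_cycles_outside_targets T edge w ->
  (forall v, @game_value V A isMax T edge w R c v <> +oo%E) ->
  forall v, ~~ T v ->
    (@game_value V A isMax T edge w R c v = -oo%E <->
     ~ max_attractor isMax T edge v).
Proof.
move=> no_deadlock _ _ neg_cycles value_finite v _.
have [next next_edge] := boolp.choice no_deadlock.
rewrite (max_attractorP _ _ next_edge); split=> [value_v v_in | v_out].
  by have := value_attractor_lb R w c next_edge v_in; rewrite value_v.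
apply: (value_outside_attractor next_edge neg_cycles) => [u|].
  exact/eqP/value_finite.
exact/negP.
Qed.
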